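(* Let $ABC$ be a triangle with circumcenter $O$, let $l$ be a line in its plane, and let $T$ be the foot of the perpendicular from $O$ to $l$. Let $R$ and $S$ be variable points on $l$ satisfying $TS = TR$, and let $S', R'$ be the isogonal conjugates of $S, R$ with respect to $ABC$. Then, as $S, R$ vary on $l$, the line $S'R'$ remains parallel to a fixed line. *)

From HB Require Import structures.
From mathcomp Require Import all_boot all_order all_algebra.
Set Implicit Arguments. Unset Strict Implicit. Unset Printing Implicit Defensive.
Import Order.TTheory GRing.Theory Num.Theory.
Local Open Scope ring_scope.

Section Plane.
Variable R : rcfType.

Definition pt := (R * R)%type.

Definition vadd (u v : pt) : pt := (u.1 + v.1, u.2 + v.2).
Definition vsub (u v : pt) : pt := (u.1 - v.1, u.2 - v.2).
Definition vscale (a : R) (u : pt) : pt := (a * u.1, a * u.2).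
Definition dot (u v : pt) : R := u.1 * v.1 + u.2 * v.2.
Definition cross (u v : pt) : R := u.1 * v.2 - u.2 * v.1.
Definition vnorm (u : pt) : R := Num.sqrt (dot u u).
Definition dist (P Q : pt) : R := vnorm (vsub P Q).

Definition on_line (P0 v X : pt) : Prop := cross (vsub X P0) v = 0.

Definition triangle (A B C : pt) : Prop := cross (vsub B A) (vsub C A) <> 0.

Definition circumcenter (A B C O : pt) : Prop :=
  dist O A = dist O B /\ dist O B = dist O C.

Definition on_sidelines (A B C P : pt) : Prop :=
  on_line A (vsub B A) P \/ on_line B (vsub C B) P \/ on_line C (vsub A C) P.

Definition bisector_dir (A B C : pt) : pt :=
  vadd (vscale (vnorm (vsub B A))^-1 (vsub B A))
       (vscale (vnorm (vsub C A))^-1 (vsub C A)).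

Definition reflect_dir (w d : pt) : pt :=
  vsub (vscale (2 * dot d w / dot w w) w) d.

Definition on_isogonal_line (A B C P X : pt) : Prop :=
  on_line A (reflect_dir (bisector_dir A B C) (vsub P A)) X.

Definition isogonal_conjugate (A B C P P' : pt) : Prop :=
  on_isogonal_line A B C P P' /\ on_isogonal_line B C A P P' /\
  on_isogonal_line C A B P P'.

End Plane.

From mathcomp Require Import all_boot all_order all_algebra.
From mathcomp Require Import ring.
Import Order.TTheory GRing.Theory Num.Theory.
Local Open Scope ring_scope.
Set Implicit Arguments. Unset Strict Implicit. Unset Printing Implicit Defensive.

(* In barycentric coordinates (α, β, γ) with respect to ABC, the isogonal
   conjugate of P is (a²βγ : b²γα : c²αβ), and by Lagrange's identity the
   normalizing sum σ(P) = a²βγ + b²γα + c²αβ equals R² - OP².  Since OT ⊥ l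
   and TS = TR, Pythagoras gives OS = OR, so S' and R' share the normalizer σ.
   Writing S = T + s v and R = T + r v with r² = s², the numerators differ by
   (s - r) times the derivative of the quadratic map (a²βγ, b²γα, c²αβ) at T
   in direction v; hence S' - R' is a multiple of a vector depending only on
   T and l. *)

Lemma mul_affine_sub (F : comPzRingType) (x y p q s r : F) : r ^+ 2 = s ^+ 2 ->
  (x + s * p) * (y + s * q) - (x + r * p) * (y + r * q) = (s - r) * (x * q + y * p).
Proof.
move=> hrs; have -> : (x + s * p) * (y + s * q) - (x + r * p) * (y + r * q)
  = (s - r) * (x * q + y * p) + (s ^+ 2 - r ^+ 2) * (p * q) by ring.
by rewrite hrs subrr mul0r addr0.
Qed.

Lemma isogonal_weights (F : fieldType) (a b c a' b' c' a2 b2 c2 : F) :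
  a' + b' + c' = 1 -> c2 != 0 ->
  b' * b * c2 = c' * c * b2 -> c' * c * a2 = a' * a * c2 ->
  let s := a2 * b * c + b2 * c * a + c2 * a * b in
  b' * s = b2 * c * a /\ c' * s = c2 * a * b.
Proof.
move=> h1 hc2 hA hB s; split.
  apply: (mulfI hc2).
  have -> : c2 * (b' * s) = b2 * c * a * c2 * (a' + b' + c')
      + (a2 * c + c2 * a) * (b' * b * c2 - c' * c * b2)
      + b2 * c * (c' * c * a2 - a' * a * c2) by rewrite /s; ring.
  by rewrite hA hB h1 !subrr !mulr0 !addr0 mulr1 mulrC.
have -> : c' * s = c2 * a * b * (a' + b' + c')
    + b * (c' * c * a2 - a' * a * c2) + a * (c' * c * b2 - b' * b * c2).
  by rewrite /s; ring.
by rewrite hA hB h1 !subrr !mulr0 !addr0 mulr1.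
Qed.

Section Vectors.
Variable R : rcfType.
Implicit Types (u v w k O S T : pt R) (x y s : R).

Definition sqdist (P Q : pt R) : R := dot (vsub P Q) (vsub P Q).

Lemma dot_ge0 u : 0 <= dot u u.
Proof. by case: u => u1 u2; rewrite /dot /= -!expr2 addr_ge0 ?sqr_ge0. Qed.

Lemma dot_eq0 u : (dot u u == 0) = (u == (0, 0)).
Proof.
case: u => u1 u2; rewrite /dot /= -!expr2 paddr_eq0 ?sqr_ge0 // !sqrf_eq0.
by rewrite xpair_eqE.
Qed.

Lemma sqr_vnorm u : vnorm u ^+ 2 = dot u u.
Proof. exact/sqr_sqrtr/dot_ge0. Qed.

Lemma vnorm_gt0 u : u != (0, 0) -> 0 < vnorm u.
Proof. by move=> u0; rewrite sqrtr_gt0 lt_def dot_eq0 u0 dot_ge0. Qed.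

Lemma sqdist_dist (P Q : pt R) : dist P Q ^+ 2 = sqdist P Q.
Proof. exact: sqr_vnorm. Qed.

Lemma sqdistC (P Q : pt R) : sqdist P Q = sqdist Q P.
Proof. by case: P Q => [p1 p2] [q1 q2]; rewrite /sqdist /dot /vsub /=; ring. Qed.

Lemma cross_neq0_left u w : cross u w != 0 -> u != (0, 0).
Proof.
by case: u => u1 u2; apply: contra => /eqP[-> ->]; rewrite /cross /= !mul0r subrr.
Qed.

Lemma cross_neq0_right u w : cross u w != 0 -> w != (0, 0).
Proof.
by case: w => w1 w2; apply: contra => /eqP[-> ->]; rewrite /cross /= !mulr0 subrr.
Qed.

Lemma vaddC u w : vadd u w = vadd w u.
Proof. by rewrite /vadd addrC [u.2 + _]addrC. Qed.

Lemma vscaleA x y u : vscale x (vscale y u) = vscale (x * y) u.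
Proof. by rewrite /vscale /= !mulrA. Qed.

Lemma vscaleDr x u w : vscale x (vadd u w) = vadd (vscale x u) (vscale x w).
Proof. by rewrite /vscale /vadd /= !mulrDr. Qed.

Lemma dot_vscale x u : dot (vscale x u) (vscale x u) = x ^+ 2 * dot u u.
Proof. by rewrite /dot /vscale /=; ring. Qed.

Lemma cross_lincomb u w x y x' y' :
  cross (vadd (vscale x u) (vscale y w)) (vadd (vscale x' u) (vscale y' w))
  = (x * y' - y * x') * cross u w.
Proof. by rewrite /cross /vadd /vscale /=; ring. Qed.

Lemma parallel_vscale u v : v != (0, 0) -> cross u v = 0 ->
  u = vscale (dot u v / dot v v) v.
Proof.
rewrite -dot_eq0; case: u v => [u1 u2] [v1 v2].
rewrite /cross /dot /vscale /= => v0 huv.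
have e1 : u1 = (u1 * v1 + u2 * v2) / (v1 * v1 + v2 * v2) * v1
    + v2 * (u1 * v2 - u2 * v1) / (v1 * v1 + v2 * v2) by field.
have e2 : u2 = (u1 * v1 + u2 * v2) / (v1 * v1 + v2 * v2) * v2
    - v1 * (u1 * v2 - u2 * v1) / (v1 * v1 + v2 * v2) by field.
by rewrite {1}e1 {3}e2 huv !mulr0 !mul0r addr0 subr0.
Qed.

Lemma on_line_sub (P0 : pt R) v S T : v != (0, 0) -> on_line P0 v S -> on_line P0 v T ->
  exists s, vsub S T = vscale s v.
Proof.
move=> v0 hS hT; exists (dot (vsub S T) v / dot v v); apply: parallel_vscale => //.
have -> : cross (vsub S T) v = cross (vsub S P0) v - cross (vsub T P0) v.
  by rewrite /cross /vsub /=; ring.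
by rewrite hS hT subrr.
Qed.

Lemma sqdist_shift S T v s : vsub S T = vscale s v -> sqdist T S = s ^+ 2 * dot v v.
Proof. by rewrite sqdistC /sqdist => ->; rewrite dot_vscale. Qed.

Lemma sqdist_perp O T S v s : dot (vsub O T) v = 0 -> vsub S T = vscale s v ->
  sqdist O S = sqdist O T + sqdist T S.
Proof.
move=> hOT hS; rewrite (sqdist_shift hS); move: hOT hS.
case: O T S v => [o1 o2] [t1 t2] [x1 x2] [v1 v2].
rewrite /sqdist /dot /vsub /vscale /= => hOT [e1 e2].
have -> : x1 = t1 + s * v1 by rewrite -e1; ring.
have -> : x2 = t2 + s * v2 by rewrite -e2; ring.
rewrite -[RHS]addr0 -(mulr0 (- 2 * s)) -hOT; ring.
Qed.

Lemma reflect_dir_lin k u w x y :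
  reflect_dir k (vadd (vscale x u) (vscale y w)) =
  vadd (vscale x (reflect_dir k u)) (vscale y (reflect_dir k w)).
Proof.
case: k u w => [k1 k2] [u1 u2] [w1 w2].
by rewrite /reflect_dir /vadd /vscale /vsub /dot /=; congr pair; ring.
Qed.

Lemma reflect_dir_swap u w : dot u u = dot w w ->
  dot (vadd u w) (vadd u w) != 0 -> reflect_dir (vadd u w) u = w.
Proof.
case: u w => [u1 u2] [w1 w2]; rewrite /reflect_dir /vadd /vscale /vsub /dot /=.
move=> huw.
have -> : (u1 + w1) * (u1 + w1) + (u2 + w2) * (u2 + w2)
    = 2 * (u1 * (u1 + w1) + u2 * (u2 + w2))
      + ((w1 * w1 + w2 * w2) - (u1 * u1 + u2 * u2)) by ring.
rewrite -huw subrr addr0 => k0.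
by rewrite divff //; congr pair; ring.
Qed.

End Vectors.

Section Barycentric.
Variable R : rcfType.
Implicit Types (A B C O P Q S T : pt R) (v : pt R).

Definition area2 A B C : R := cross (vsub B A) (vsub C A).

Definition bary_a A B C P := area2 P B C / area2 A B C.
Definition bary_b A B C P := area2 A P C / area2 A B C.
Definition bary_c A B C P := area2 A B P / area2 A B C.

Definition vbary_a A B C v := cross (vsub C B) v / area2 A B C.
Definition vbary_b A B C v := cross (vsub A C) v / area2 A B C.
Definition vbary_c A B C v := cross (vsub B A) v / area2 A B C.

(* The circumcircle's equation, and the normalizing sum of the isogonal
   conjugate (a²βγ : b²γα : c²αβ). *)
Definition circum_form A B C P :=
  sqdist C B * bary_b A B C P * bary_c A B C P
  + sqdist A C * bary_c A B C P * bary_a A B C P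
  + sqdist B A * bary_a A B C P * bary_b A B C P.

Lemma area2_rot A B C : area2 B C A = area2 A B C.
Proof. by case: A B C => [a1 a2] [b1 b2] [c1 c2]; rewrite /area2 /cross /vsub /=; ring. Qed.

Lemma bary_rot A B C P :
  bary_b B C A P = bary_c A B C P /\ bary_c B C A P = bary_a A B C P.
Proof.
by rewrite /bary_a /bary_b /bary_c (area2_rot A B C) (area2_rot A B P) (area2_rot P B C).
Qed.

Local Ltac coords :=
  rewrite /circum_form /bary_a /bary_b /bary_c /vbary_a /vbary_b /vbary_c
          /sqdist /area2 /cross /dot /vsub /vadd /vscale /=.

Lemma bary_sum A B C P : area2 A B C != 0 ->
  bary_a A B C P + bary_b A B C P + bary_c A B C P = 1.
Proof. by case: A B C P => [a1 a2] [b1 b2] [c1 c2] [p1 p2]; coords => hD; field. Qed.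

Lemma vsubA_bary A B C P : area2 A B C != 0 ->
  vsub P A = vadd (vscale (bary_b A B C P) (vsub B A)) (vscale (bary_c A B C P) (vsub C A)).
Proof.
by case: A B C P => [a1 a2] [b1 b2] [c1 c2] [p1 p2]; coords => hD; congr pair; field.
Qed.

Lemma vsub_bary A B C P Q : area2 A B C != 0 ->
  vsub P Q = vadd (vscale (bary_b A B C P - bary_b A B C Q) (vsub B A))
                  (vscale (bary_c A B C P - bary_c A B C Q) (vsub C A)).
Proof.
case: A B C P Q => [a1 a2] [b1 b2] [c1 c2] [p1 p2] [q1 q2].
by coords => hD; congr pair; field.
Qed.

Lemma bary_shift A B C S T v s : area2 A B C != 0 -> vsub S T = vscale s v ->
  [/\ bary_a A B C S = bary_a A B C T + s * vbary_a A B C v,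
      bary_b A B C S = bary_b A B C T + s * vbary_b A B C v &
      bary_c A B C S = bary_c A B C T + s * vbary_c A B C v].
Proof.
case: A B C S T v => [a1 a2] [b1 b2] [c1 c2] [x1 x2] [t1 t2] [v1 v2].
coords => hD [e1 e2].
have -> : x1 = t1 + s * v1 by rewrite -e1; ring.
have -> : x2 = t2 + s * v2 by rewrite -e2; ring.
by split; field.
Qed.

Lemma bary_neq0 A B C P : area2 A B C != 0 -> ~ on_sidelines A B C P ->
  [/\ bary_a A B C P != 0, bary_b A B C P != 0 & bary_c A B C P != 0].
Proof.
move=> hD hP; rewrite /bary_a /bary_b /bary_c !mulf_eq0 !invr_eq0 (negbTE hD) !orbF.
have opp_area2 X Y Z : cross (vsub Z X) (vsub Y X) = - area2 X Y Z.
  by case: X Y Z => [x1 x2] [y1 y2] [z1 z2]; rewrite /area2 /cross /vsub /=; ring.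
split; apply/eqP => h0; apply: hP; rewrite /on_sidelines /on_line.
- by right; left; rewrite opp_area2 area2_rot h0 oppr0.
- by right; right; rewrite opp_area2 -area2_rot h0 oppr0.
- by left; rewrite opp_area2 h0 oppr0.
Qed.

Lemma bary_sqdist A B C O P : area2 A B C != 0 ->
  bary_a A B C P * sqdist O A + bary_b A B C P * sqdist O B + bary_c A B C P * sqdist O C
  = sqdist O P + circum_form A B C P.
Proof.
case: A B C O P => [a1 a2] [b1 b2] [c1 c2] [o1 o2] [p1 p2].
by coords => hD; field.
Qed.

End Barycentric.

Section Isogonal.
Variable R : rcfType.
Implicit Types (A B C O P S T v : pt R).

Lemma on_isogonal_line_bary A B C P P' : triangle A B C ->
  on_isogonal_line A B C P P' ->
  bary_b A B C P' * bary_b A B C P * sqdist B A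
  = bary_c A B C P' * bary_c A B C P * sqdist C A.
Proof.
move=> /eqP hD; rewrite /on_isogonal_line /on_line /bisector_dir.
rewrite (vsubA_bary P hD) (vsubA_bary P' hD) /sqdist.
set u := vsub B A; set w := vsub C A.
set b := bary_b A B C P; set c := bary_c A B C P.
set b' := bary_b A B C P'; set c' := bary_c A B C P'.
have nu_gt0 : 0 < vnorm u := vnorm_gt0 (cross_neq0_left hD).
have nw_gt0 : 0 < vnorm w := vnorm_gt0 (cross_neq0_right hD).
set nu := vnorm u in nu_gt0 *; set nw := vnorm w in nw_gt0 *.
have nu0 : nu != 0 by rewrite gt_eqF.
have nw0 : nw != 0 by rewrite gt_eqF.
have unit_u : dot (vscale nu^-1 u) (vscale nu^-1 u) = 1.
  by rewrite dot_vscale -sqr_vnorm -exprMn mulVf ?expr1n.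
have unit_w : dot (vscale nw^-1 w) (vscale nw^-1 w) = 1.
  by rewrite dot_vscale -sqr_vnorm -exprMn mulVf ?expr1n.
have bis0 : dot (vadd (vscale nu^-1 u) (vscale nw^-1 w))
                (vadd (vscale nu^-1 u) (vscale nw^-1 w)) != 0.
  rewrite dot_eq0; apply: (@cross_neq0_left _ _ (vscale nw^-1 w)).
  have -> : cross (vadd (vscale nu^-1 u) (vscale nw^-1 w)) (vscale nw^-1 w)
      = nu^-1 * nw^-1 * cross u w by rewrite /cross /vadd /vscale /=; ring.
  by rewrite !mulf_neq0 ?invr_eq0.
(* Reflection in the bisector swaps the unit vectors along AB and AC. *)
have -> : vadd (vscale b u) (vscale c w)
    = vadd (vscale (b * nu) (vscale nu^-1 u)) (vscale (c * nw) (vscale nw^-1 w)).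
  by rewrite !vscaleA mulfK // mulfK.
rewrite reflect_dir_lin reflect_dir_swap ?unit_u ?unit_w //.
rewrite [vadd (vscale nu^-1 u) _]vaddC reflect_dir_swap ?unit_u ?unit_w //;
  last by rewrite vaddC.
rewrite !vscaleA [X in cross _ X]vaddC cross_lincomb.
move/eqP; rewrite mulf_eq0 (negbTE hD) orbF subr_eq0 => /eqP h.
rewrite -!sqr_vnorm -/nu -/nw.
have -> : b' * b * nu ^+ 2 = b' * (b * nu * nw^-1) * (nu * nw) by field.
have -> : c' * c * nw ^+ 2 = c' * (c * nw * nu^-1) * (nu * nw) by field.
by rewrite h.
Qed.

Lemma isogonal_conjugate_bary A B C P P' : triangle A B C ->
  ~ on_sidelines A B C P -> isogonal_conjugate A B C P P' ->
  [/\ circum_form A B C P != 0,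
      bary_b A B C P' * circum_form A B C P
        = sqdist A C * bary_c A B C P * bary_a A B C P &
      bary_c A B C P' * circum_form A B C P
        = sqdist B A * bary_a A B C P * bary_b A B C P].
Proof.
move=> tri hP [isoA [isoB _]]; have hD : area2 A B C != 0 by apply/eqP.
have triB : triangle B C A by rewrite /triangle -/(area2 B C A) area2_rot; apply/eqP.
have [ha hb _] := bary_neq0 hD hP.
have hA := on_isogonal_line_bary tri isoA.
have hB := on_isogonal_line_bary triB isoB.
have [rotb rotc] := bary_rot A B C P; have [rotb' rotc'] := bary_rot A B C P'.
rewrite rotb rotc rotb' rotc' (sqdistC A B) in hB; rewrite (sqdistC C A) in hA.
have c2_0 : sqdist B A != 0 by rewrite /sqdist dot_eq0 (cross_neq0_left hD).
have [eb ec] := isogonal_weights (bary_sum P' hD) c2_0 hA hB.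
rewrite -/(circum_form A B C P) in eb ec.
split => //; apply/eqP => sig0; move: ec; rewrite sig0 mulr0 => /esym/eqP.
by rewrite (negPf (mulf_neq0 (mulf_neq0 c2_0 ha) hb)).
Qed.

Lemma circum_form_circumcenter A B C O P : triangle A B C -> circumcenter A B C O ->
  circum_form A B C P = sqdist O A - sqdist O P.
Proof.
move=> /eqP hD [hAB hBC].
have eB : sqdist O B = sqdist O A by rewrite -!sqdist_dist hAB.
have eC : sqdist O C = sqdist O A by rewrite -!sqdist_dist -hBC hAB.
apply/eqP; rewrite eq_sym subr_eq addrC -(bary_sqdist O P hD) eB eC.
by rewrite -{1}[sqdist O A]mul1r -(bary_sum P hD) !mulrDl.
Qed.

(* The derivative at T in direction v of the (b², c²)-components of the map
   P |-> (a²βγ, b²γα, c²αβ), as a vector in the basis (B - A, C - A). *)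
Definition isogonal_chord_dir A B C T v : pt R :=
  vadd (vscale (sqdist A C * (bary_c A B C T * vbary_a A B C v
                              + bary_a A B C T * vbary_c A B C v)) (vsub B A))
       (vscale (sqdist B A * (bary_a A B C T * vbary_b A B C v
                              + bary_b A B C T * vbary_a A B C v)) (vsub C A)).

Lemma isogonal_chord A B C T v S Q S' Q' s r : triangle A B C ->
  vsub S T = vscale s v -> vsub Q T = vscale r v -> r ^+ 2 = s ^+ 2 ->
  circum_form A B C S = circum_form A B C Q ->
  ~ on_sidelines A B C S -> ~ on_sidelines A B C Q ->
  isogonal_conjugate A B C S S' -> isogonal_conjugate A B C Q Q' ->
  vsub S' Q' = vscale ((s - r) / circum_form A B C S) (isogonal_chord_dir A B C T v).
Proof.
move=> tri hS hQ hrs hsig nS nQ cS cQ; have hD : area2 A B C != 0 by apply/eqP.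
have [sig0 Sb Sc] := isogonal_conjugate_bary tri nS cS.
have [_ Qb Qc] := isogonal_conjugate_bary tri nQ cQ; rewrite -hsig in Qb Qc.
have [Sa' Sb' Sc'] := bary_shift hD hS; have [Qa' Qb' Qc'] := bary_shift hD hQ.
set sig := circum_form A B C S in sig0 Sb Sc Qb Qc *.
rewrite (vsub_bary S' Q' hD) /isogonal_chord_dir vscaleDr !vscaleA.
congr (vadd (vscale _ _) (vscale _ _)); apply: (mulIf sig0); rewrite mulrBl.
- rewrite Sb Qb Sa' Sc' Qa' Qc' -mulrA -[X in _ - X]mulrA -mulrBr.
  by rewrite mul_affine_sub //; field.
- rewrite Sc Qc Sa' Sb' Qa' Qb' -mulrA -[X in _ - X]mulrA -mulrBr.
  by rewrite mul_affine_sub //; field.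
Qed.

End Isogonal.

Theorem proposition3p2 (R : rcfType) (A B C O P0 v T : pt R) :
  triangle A B C -> circumcenter A B C O ->
  v <> (0, 0) ->
  on_line P0 v T -> dot (vsub O T) v = 0 ->
  exists d : pt R, d <> (0, 0) /\
    forall S Rp S' Rp' : pt R,
      on_line P0 v S -> on_line P0 v Rp -> dist T S = dist T Rp ->
      ~ on_sidelines A B C S -> ~ on_sidelines A B C Rp ->
      isogonal_conjugate A B C S S' -> isogonal_conjugate A B C Rp Rp' ->
      S' <> Rp' ->
      cross (vsub S' Rp') d = 0.
Proof.
move=> tri circ /eqP v0 hT hOT.
set d := isogonal_chord_dir A B C T v.
exists (if d == (0, 0) then (1, 0) else d); split.
  by case: eqP => // _ [/eqP]; rewrite oner_eq0.
move=> S Q S' Q' hS hQ hTSQ nS nQ cS cQ _.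
have [s eS] := on_line_sub v0 hS hT; have [r eQ] := on_line_sub v0 hQ hT.
have eTSQ : sqdist T S = sqdist T Q by rewrite -!sqdist_dist hTSQ.
have hrs : r ^+ 2 = s ^+ 2.
  have vv0 : dot v v != 0 by rewrite dot_eq0.
  by apply: (mulIf vv0); rewrite -(sqdist_shift eS) -(sqdist_shift eQ) eTSQ.
have hsig : circum_form A B C S = circum_form A B C Q.
  rewrite !(circum_form_circumcenter _ tri circ).
  by rewrite (sqdist_perp hOT eS) (sqdist_perp hOT eQ) eTSQ.
rewrite (isogonal_chord tri eS eQ hrs hsig nS nQ cS cQ) -/d.
by case: eqP => [->|_]; rewrite /cross /vscale /=; ring.
Qed.
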